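(* Let $C$ be a finite order SISO deterministic program with uniformly distributed secret input. Let $S=\{N\in\mathbb{N}^+ : |\mathcal{O}_N|\ge 2\}$, and assume $S\neq\emptyset$. Then for every $\alpha\in(0,\infty]$, $$0<\inf_{N\in S}\frac{IL_\alpha(C,N)}{T_\alpha(\mathbf{p}_N)}\le\sup_{N\in S}\frac{IL_\alpha(C,N)}{T_\alpha(\mathbf{p}_N)}<\infty.$$
   Context: A SISO deterministic program $C$ is a family indexed by $N\in\mathbb{N}^+$: for each $N$, a random variable $A$ uniformly distributed on $\mathcal{A}_N=\{0,1,\dots,N-1\}$, and a surjective map $F_N$ from $\mathcal{A}_N$ onto a finite set $\mathcal{O}_N$. The output is $O=F_N(A)$, and $\mathbf{p}_N$ denotes its distribution vector, so $\mathbf{p}_N(o)=|F_N^{-1}(o)|/N$. $C$ is of finite order (an FOP) if $\sup_N\|\mathbf{p}_N\|_0<\infty$, where $\|\mathbf{p}\|_0$ is the number of nonzero entries of $\mathbf{p}$; equivalently, $\sup_N|\mathcal{O}_N|<\infty$. For a probability vector $\mathbf{p}=(p_1,\dots,p_n)$ and $\alpha\in(0,\infty]$, the Rényi entropy is $H_\alpha(\mathbf{p})=\frac{1}{1-\alpha}\log\sum_i p_i^\alpha$ for $\alpha\notin\{1,\infty\}$. The limiting cases are $H_1(\mathbf{p})=-\sum_i p_i\log p_i$ and $H_\infty(\mathbf{p})=-\log\max_i p_i$. The $\alpha$-information leakage is $IL_\alpha(C,N)=H_\alpha(\mathbf{p}_N)$. With $p_1=\|\mathbf{p}\|_\infty=\max_i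 p_i$, define $$T_\alpha(\mathbf{p})=\begin{cases}1-p_1 & \text{if } \alpha>1 \text{ (including } \alpha=\infty),\\ -(1-p_1)\log(1-p_1) & \text{if } \alpha=1,\\ (1-p_1)^\alpha & \text{if } 0<\alpha<1.\end{cases}$$ *)

From HB Require Import structures.
From mathcomp Require Import all_boot all_order all_algebra.
From mathcomp Require Import all_classical all_reals.
From mathcomp Require Import ereal exp.
Set Implicit Arguments. Unset Strict Implicit. Unset Printing Implicit Defensive.
Import Order.TTheory GRing.Theory Num.Theory.
Local Open Scope ring_scope.

Section Defs.
Variable R : realType.

(* distribution vector p_N of the output O = F_N(A), A uniform on 'I_N *)
Definition outdist (N : nat) (O : finType) (F : 'I_N -> O) (o : O) : R :=
  (#|[set a : 'I_N | F a == o]|)%:R / N%:R.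

(* ||p||_infty = max_i p_i  (p is nonnegative) *)
Definition pmax (T : finType) (p : T -> R) : R := \big[Num.max/0]_(t : T) p t.

(* Renyi entropy H_alpha, alpha in (0, +oo] given as an extended real *)
Definition renyi (T : finType) (p : T -> R) (alpha : \bar R) : R :=
  match alpha with
  | +oo%E => - ln (pmax p)
  | (a%:E)%E => if a == 1 then - \sum_(t : T) p t * ln (p t)
                else (1 - a)^-1 * ln (\sum_(t : T) p t `^ a)
  | -oo%E => 0 (* not used: alpha > 0 *)
  end.

Definition Talpha (T : finType) (p : T -> R) (alpha : \bar R) : R :=
  let p1 := pmax p in
  match alpha with
  | +oo%E => 1 - p1
  | (a%:E)%E => if 1 < a then 1 - p1
                else if a == 1 then - ((1 - p1) * ln (1 - p1))
                else (1 - p1) `^ a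
  | -oo%E => 0
  end.

Definition leakage (O : nat -> finType) (F : forall N, 'I_N -> O N)
  (alpha : \bar R) (N : nat) : R := renyi (outdist (F N)) alpha.

End Defs.

(* Let [q := 1 - max_i p_i], so that [T_alpha] is [q], [- q ln q] or [q `^ alpha]. The
   min-entropy [- ln (1 - q)] lies between [q] and [q / (1 - q)]; for [alpha > 1], [H_alpha] lies
   between the min-entropy and [alpha / (alpha - 1)] times it; the Shannon entropy is at least the
   contribution [- q ln q] of the lumped non-maximal outcomes and at most that plus [|O| q]; for
   [alpha < 1], [\sum_i p_i `^ alpha] lies between [1 + q `^ alpha - q] and [1 + |O| q `^ alpha].
   With at most [K] outputs we have [max_i p_i >= 1/K], i.e. [q <= 1 - 1/K], which turns all
   these into bounds [lo * T_alpha <= H_alpha <= hi * T_alpha] with [lo > 0] depending only on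
   [alpha] and [K]. *)

From HB Require Import structures.
From mathcomp Require Import all_boot all_order all_algebra.
From mathcomp Require Import all_classical all_reals.
From mathcomp Require Import ereal exp.
From mathcomp Require Import ring lra.
Import Order.TTheory GRing.Theory Num.Theory.
Set Implicit Arguments. Unset Strict Implicit.
Local Open Scope ring_scope.

Section RealFacts.
Variable R : realType.
Implicit Types x y a : R.

Lemma ln_le_subr1 x : 0 < x -> ln x <= x - 1.
Proof. by move=> x0; have := @le_ln1Dx R (x - 1); rewrite addrCA subrr addr0; apply; lra. Qed.

Lemma subr1_inv_le_ln x : 0 < x -> 1 - x^-1 <= ln x.
Proof.
move=> x0; have := @ln_le_subr1 x^-1; rewrite invr_gt0 lnV ?posrE // => /(_ x0).
lra.
Qed.

(* [ln (1 + y) >= y / (1 + y)] and [1 + y <= 2]. *)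
Lemma half_le_ln1D y : 0 <= y -> y <= 1 -> y / 2 <= ln (1 + y).
Proof.
move=> y0 y1; have y1D : 0 < 1 + y by lra.
apply: le_trans _ (subr1_inv_le_ln y1D).
have -> : 1 - (1 + y)^-1 = y * (1 + y)^-1 by field; lra.
by apply: ler_wpM2l => //; rewrite lef_pV2 ?posrE //; lra.
Qed.

(* [x i `^ a = x i * x i `^ (a - 1) >= x i * s `^ (a - 1)], where [s] is the sum. *)
Lemma powR_sum_le_sum_powR (I : finType) (P : pred I) (x : I -> R) a :
  0 < a -> a <= 1 -> (forall i, P i -> 0 < x i) ->
  (\sum_(i | P i) x i) `^ a <= \sum_(i | P i) x i `^ a.
Proof.
move=> a0 a1 x_gt0; set s := \sum_(i | P i) x i.
have s_ge0 : 0 <= s by apply: sumr_ge0 => i /x_gt0/ltW.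
rewrite -(mulr_powRB1 s_ge0 a0) {1}/s mulr_suml; apply: ler_sum => i Pi.
have xi_gt0 := x_gt0 i Pi.
have xi_le : x i <= s.
  rewrite /s (bigD1 i) //= lerDl; apply: sumr_ge0 => j /andP[/x_gt0/ltW //].
rewrite -(mulr_powRB1 (ltW xi_gt0) a0); apply: ler_wpM2l; first exact: ltW.
rewrite -[a - 1]opprB !powRN lef_pV2 ?posrE ?powR_gt0 //; last exact: lt_le_trans xi_le.
by apply: ge0_ler_powR; rewrite ?nnegrE ?subr_ge0 ?(ltW xi_gt0).
Qed.

Lemma powR_le1 x a : 0 <= x -> x <= 1 -> 0 <= a -> x `^ a <= 1.
Proof.
move=> x0 x1 a0; have := @ge0_ler_powR R a a0 x 1; rewrite powR1.
by apply; rewrite ?nnegrE.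
Qed.
End RealFacts.

Definition renyi_ratio_lb (R : realType) (K : nat) (alpha : \bar R) : R :=
  if alpha is (a%:E)%E then
    if a < 1 then (1 - (1 - K%:R^-1) `^ (1 - a)) / (2 * (1 - a)) else 1
  else 1.

Definition renyi_ratio_ub (R : realType) (K : nat) (alpha : \bar R) : R :=
  if alpha is (a%:E)%E then
    if 1 < a then a / (a - 1) * K%:R
    else if a == 1 then 1 + K%:R * K%:R
    else (1 - a)^-1 * K%:R
  else K%:R.

Lemma renyi_ratio_lb_gt0 (R : realType) (K : nat) (alpha : \bar R) :
  (0 < K)%N -> 0 < renyi_ratio_lb K alpha.
Proof.
move=> K_gt0; case: alpha => [a||] //=; case: ifP => [a1|_] //.
have Kinv_gt0 : 0 < K%:R^-1 :> R by rewrite invr_gt0 ltr0n.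
have Kinv_le1 : K%:R^-1 <= 1 :> R by rewrite invf_le1 ?ltr0n // ler1n.
have a1' : 0 < 1 - a by rewrite subr_gt0.
rewrite divr_gt0 ?mulr_gt0 // subr_gt0.
have := @gt0_ltr_powR R (1 - a) a1' (1 - K%:R^-1) 1; rewrite powR1.
by apply; rewrite ?nnegrE; lra.
Qed.

Section DominantMass.
Variables (R : realType) (T : finType) (p : T -> R) (t0 : T).
Hypotheses (p_gt0 : forall t, 0 < p t) (sum_p : \sum_t p t = 1)
  (pmax_p : pmax p = p t0) (card_gt1 : (1 < #|T|)%N).

Local Notation q := (1 - p t0).

Lemma p_le_max t : p t <= p t0.
Proof. by rewrite -pmax_p; apply: le_bigmax. Qed.

Lemma sum_neq_max : \sum_(t | t != t0) p t = q.
Proof. by rewrite -sum_p [in RHS](bigD1 t0) //= addrC addrK. Qed.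

Lemma le_compl_max t : t != t0 -> p t <= q.
Proof.
move=> tt0; rewrite -sum_neq_max (bigD1 t) //= lerDl.
by apply: sumr_ge0 => i _; exact: ltW.
Qed.

Lemma compl_max_gt0 : 0 < q.
Proof.
have [t1 t1t0] : exists t1, t1 != t0.
  have /card_gt1P [x [y [_ _ xy]]] := card_gt1.
  by case: (eqVneq x t0) => [<-|]; [exists y; rewrite eq_sym|exists x].
exact: lt_le_trans (p_gt0 t1) (le_compl_max t1t0).
Qed.

Lemma compl_max_le_min_entropy : q <= - ln (p t0).
Proof. by have := ln_le_subr1 (p_gt0 t0); lra. Qed.

Lemma min_entropy_le_compl_div_max : - ln (p t0) <= q / p t0.
Proof.
have pV_gt0 : 0 < (p t0)^-1 by rewrite invr_gt0.
have := ln_le_subr1 pV_gt0; rewrite lnV ?posrE //.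
by rewrite mulrBl mulfV ?gt_eqF // div1r.
Qed.

Lemma sum_powR_ge_max a : 0 < a -> p t0 `^ a <= \sum_t p t `^ a.
Proof.
move=> a0; rewrite (bigD1 t0) //= lerDl.
by apply: sumr_ge0 => t _; exact: powR_ge0.
Qed.

Lemma sum_powR_gt0 a : 0 < a -> 0 < \sum_t p t `^ a.
Proof. by move=> a0; apply: lt_le_trans (sum_powR_ge_max a0); exact: powR_gt0. Qed.

(* Both bounds for [a > 1] come from [p t0 `^ a <= \sum_t p t `^ a <= p t0 `^ (a - 1)]. *)
Lemma min_entropy_le_renyi_gt1 a : 1 < a ->
  - ln (p t0) <= (1 - a)^-1 * ln (\sum_t p t `^ a).
Proof.
move=> a1; have a0 : 0 < a := lt_trans ltr01 a1.
have sum_le : \sum_t p t `^ a <= p t0 `^ (a - 1).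
  rewrite -[X in _ <= X]mul1r -{1}sum_p mulr_suml; apply: ler_sum => t _.
  rewrite -(mulr_powRB1 (ltW (p_gt0 t)) a0); apply: ler_wpM2l; first exact: ltW.
  by apply: ge0_ler_powR; rewrite ?nnegrE ?subr_ge0 ?p_le_max //; apply: ltW.
have := sum_le; rewrite -ler_ln ?posrE ?powR_gt0 ?sum_powR_gt0 // ln_powR.
rewrite -[1 - a]opprB invrN mulNr -mulrN ler_pdivlMl ?subr_gt0 //; lra.
Qed.

Lemma renyi_gt1_le_min_entropy a : 1 < a ->
  (1 - a)^-1 * ln (\sum_t p t `^ a) <= a / (a - 1) * - ln (p t0).
Proof.
move=> a1; have a0 : 0 < a := lt_trans ltr01 a1.
have := sum_powR_ge_max a0; rewrite -ler_ln ?posrE ?powR_gt0 ?sum_powR_gt0 // ln_powR.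
rewrite -[1 - a]opprB invrN mulNr -mulrN mulrAC ler_pdivrMl ?subr_gt0 //.
by rewrite mulrCA mulfV ?gt_eqF ?subr_gt0 // mulr1; lra.
Qed.

Lemma max_lt1 : p t0 < 1.
Proof. by have := compl_max_gt0; lra. Qed.

Lemma compl_entropy_le_shannon : - (q * ln q) <= - \sum_t p t * ln (p t).
Proof.
have q_gt0 := compl_max_gt0.
have max_term : 0 <= - (p t0 * ln (p t0)).
  by rewrite oppr_ge0 pmulr_rle0 // ln_le0 ?(ltW max_lt1).
have -> : q * ln q = \sum_(t | t != t0) p t * ln q by rewrite -mulr_suml sum_neq_max.
rewrite [in X in _ <= X](bigD1 t0) //= opprD -!sumrN.
apply: ler_wpDl max_term _; apply: ler_sum => t tt0.
rewrite lerN2; apply: ler_wpM2l; first exact: ltW.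
by rewrite ler_ln ?posrE //; exact: le_compl_max.
Qed.

(* [- p ln p <= - p ln q + (q - p)] for [p <= q], by [ln (q / p) <= q / p - 1]. *)
Lemma shannon_le_compl_entropyD : - \sum_t p t * ln (p t) <= - (q * ln q) + #|T|%:R * q.
Proof.
have q_gt0 := compl_max_gt0.
have max_term : - (p t0 * ln (p t0)) <= q.
  have := min_entropy_le_compl_div_max; rewrite -(ler_pM2l (p_gt0 t0)) mulrCA mulfV ?gt_eqF //.
  by rewrite mulr1 mulrN.
have term t : t != t0 -> - (p t * ln (p t)) <= - (p t * ln q) + q.
  move=> tt0; have pt_gt0 := p_gt0 t.
  have := ln_le_subr1 (divr_gt0 q_gt0 pt_gt0); rewrite ln_div ?posrE //.
  rewrite -(ler_pM2l pt_gt0) mulrBr mulrBr mulrCA mulfV ?gt_eqF // mulr1 mulr1; lra.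
have -> : q * ln q = \sum_(t | t != t0) p t * ln q by rewrite -mulr_suml sum_neq_max.
rewrite (bigD1 t0) //= opprD -sumrN.
apply: le_trans (lerD max_term (ler_sum _ term)) _.
rewrite big_split /= sumrN sumr_const (cardC1 t0).
rewrite -[in X in _ <= X](prednK (ltnW card_gt1)) -natr1 mulrDl mul1r mulr_natl; lra.
Qed.

Lemma sum_powR_le a : 0 < a -> a <= 1 -> \sum_t p t `^ a <= 1 + #|T|%:R * q `^ a.
Proof.
move=> a0 a1; have q_gt0 := compl_max_gt0.
rewrite (bigD1 t0) //=; apply: lerD.
  by apply: powR_le1; rewrite ?(ltW (p_gt0 t0)) ?(ltW max_lt1) ?(ltW a0).
apply: (@le_trans _ _ (\sum_(t | t != t0) q `^ a)).
  apply: ler_sum => t tt0; apply: ge0_ler_powR; rewrite ?nnegrE ?(ltW a0) ?(ltW q_gt0) //.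
  - exact: ltW (p_gt0 t).
  - exact: le_compl_max.
rewrite sumr_const (cardC1 t0) -[_ *+ _]mulr_natl.
apply: ler_wpM2r; first exact: powR_ge0.
by rewrite ler_nat leq_pred.
Qed.

Lemma sum_powR_ge a : 0 < a -> a <= 1 -> 1 + (q `^ a - q) <= \sum_t p t `^ a.
Proof.
move=> a0 a1; have q_gt0 := compl_max_gt0.
have max_term : p t0 <= p t0 `^ a by rewrite ger1_powR // p_gt0 (ltW max_lt1).
have rest : q `^ a <= \sum_(t | t != t0) p t `^ a.
  by rewrite -sum_neq_max; apply: powR_sum_le_sum_powR.
rewrite (bigD1 t0) //=; lra.
Qed.

Variable K : nat.
Hypothesis card_le : (#|T| <= K)%N.

Let K_gt0 : 0 < K%:R :> R.
Proof. by rewrite ltr0n (leq_trans _ card_le) // ltnW. Qed.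

Lemma inv_le_max : K%:R^-1 <= p t0.
Proof.
rewrite -[_^-1]div1r ler_pdivrMr // -[X in X <= _]sum_p.
apply: le_trans (ler_sum _ (fun t _ => p_le_max t)) _.
by rewrite sumr_const -[_ *+ _]mulr_natr ler_pM2l // ler_nat.
Qed.

Lemma min_entropy_le_card : - ln (p t0) <= K%:R * q.
Proof.
apply: le_trans (min_entropy_le_compl_div_max) _; rewrite mulrC ler_pM2r ?compl_max_gt0 //.
by rewrite -[K%:R]invrK lef_pV2 ?posrE ?invr_gt0 ?inv_le_max.
Qed.

Lemma compl_max_le_card_entropy : q <= K%:R * - (q * ln q).
Proof.
have q_gt0 := compl_max_gt0.
have : K%:R^-1 <= - ln q by have := ln_le_subr1 q_gt0; have := inv_le_max; lra.
rewrite -(ler_pM2l K_gt0) mulfV ?gt_eqF // => K_lnq.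
have -> : K%:R * - (q * ln q) = q * (K%:R * - ln q) by ring.
by rewrite -[X in X <= _]mulr1 ler_pM2l.
Qed.

Lemma shannon_le_card : - \sum_t p t * ln (p t) <= (1 + K%:R * K%:R) * - (q * ln q).
Proof.
apply: le_trans shannon_le_compl_entropyD _.
have : #|T|%:R * q <= K%:R * q by rewrite ler_pM2r ?compl_max_gt0 // ler_nat.
have : K%:R * q <= K%:R * (K%:R * - (q * ln q)).
  by rewrite ler_pM2l // compl_max_le_card_entropy.
lra.
Qed.

Lemma renyi_lt1_le_card a : 0 < a -> a < 1 ->
  (1 - a)^-1 * ln (\sum_t p t `^ a) <= (1 - a)^-1 * K%:R * q `^ a.
Proof.
move=> a0 a1; rewrite -mulrA ler_pM2l ?invr_gt0 ?subr_gt0 //.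
have := ln_le_subr1 (sum_powR_gt0 a0); have := sum_powR_le a0 (ltW a1).
have : #|T|%:R * q `^ a <= K%:R * q `^ a by apply: ler_wpM2r; rewrite ?powR_ge0 ?ler_nat.
lra.
Qed.

(* With [y := q `^ a - q], [\sum_t p t `^ a >= 1 + y] and [y >= (1 - d) q `^ a], because
   [q = q `^ a * q `^ (1 - a)] and [q `^ (1 - a) <= d := (1 - K^-1) `^ (1 - a)]. *)
Lemma renyi_lt1_ge_card a : 0 < a -> a < 1 ->
  (1 - (1 - K%:R^-1) `^ (1 - a)) / (2 * (1 - a)) * q `^ a
    <= (1 - a)^-1 * ln (\sum_t p t `^ a).
Proof.
move=> a0 a1; have q_gt0 := compl_max_gt0; have p1 := max_lt1.
have Kp := inv_le_max; have K_ge0 : 0 <= K%:R^-1 :> R by rewrite invr_ge0.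
set d := (1 - K%:R^-1) `^ (1 - a); set y := q `^ a - q.
have q_split : q = q `^ a * q `^ (1 - a).
  rewrite -powRD; first by rewrite [a + _]addrC subrK powRr1 // ltW.
  by rewrite (gt_eqF q_gt0) implybT.
have qd : q `^ (1 - a) <= d by apply: ge0_ler_powR; rewrite ?nnegrE; lra.
have d_le1 : d <= 1 by rewrite /d; apply: powR_le1; lra.
have qa_le1 : q `^ a <= 1 by apply: powR_le1; lra.
have y_ge : q `^ a * (1 - d) <= y.
  rewrite /y [X in _ <= _ - X]q_split mulrBr mulr1 lerD2l lerN2.
  by apply: ler_wpM2l; rewrite ?powR_ge0.
have y_ge0 : 0 <= y by apply: le_trans y_ge; rewrite mulr_ge0 ?powR_ge0 ?subr_ge0.
have y_le1 : y <= 1 by rewrite /y; lra.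
have ln_ge : ln (1 + y) <= ln (\sum_t p t `^ a).
  have := sum_powR_ge a0 (ltW a1); rewrite ler_ln ?posrE ?sum_powR_gt0 //; lra.
have := half_le_ln1D y_ge0 y_le1.
have -> : (1 - d) / (2 * (1 - a)) * q `^ a = (1 - a)^-1 * (q `^ a * (1 - d) / 2).
  by rewrite invfM; ring.
rewrite ler_pM2l ?invr_gt0 ?subr_gt0 //; lra.
Qed.

Lemma Talpha_gt0 alpha : (0 < alpha)%E -> 0 < Talpha p alpha.
Proof.
have q_gt0 := compl_max_gt0.
case: alpha => [a||] // a0; rewrite /Talpha pmax_p //.
case: (ltgtP a 1) => [a1|a1|_] //; first exact: powR_gt0.
by rewrite oppr_gt0 pmulr_rlt0 // ln_lt0 // q_gt0; have := p_gt0 t0; lra.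
Qed.

Lemma renyi_ratio_lb_le alpha : (0 < alpha)%E ->
  renyi_ratio_lb K alpha * Talpha p alpha <= renyi p alpha.
Proof.
case: alpha => [a||] // a0; rewrite /renyi_ratio_lb /Talpha /renyi pmax_p; last first.
  by rewrite mul1r; exact: compl_max_le_min_entropy.
rewrite lte_fin in a0; case: (ltgtP a 1) => [a1|a1|a1]; rewrite ?mul1r.
- exact: renyi_lt1_ge_card.
- exact: le_trans (compl_max_le_min_entropy) (min_entropy_le_renyi_gt1 a1).
- exact: compl_entropy_le_shannon.
Qed.

Lemma renyi_le_ratio_ub alpha : (0 < alpha)%E ->
  renyi p alpha <= renyi_ratio_ub K alpha * Talpha p alpha.
Proof.
case: alpha => [a||] // a0; rewrite /renyi_ratio_ub /Talpha /renyi pmax_p; last first.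
  exact: min_entropy_le_card.
rewrite lte_fin in a0; case: (ltgtP a 1) => [a1|a1|a1].
- exact: renyi_lt1_le_card.
- apply: le_trans (renyi_gt1_le_min_entropy a1) _; rewrite -[_ * K%:R * _]mulrA.
  apply: ler_wpM2l; last exact: min_entropy_le_card.
  by apply: divr_ge0; [exact: ltW | rewrite subr_ge0; exact: ltW].
- exact: (shannon_le_card).
Qed.
End DominantMass.

Lemma pmax_attained (R : realType) (T : finType) (p : T -> R) :
  (0 < #|T|)%N -> (forall t, 0 <= p t) -> exists t0, pmax p = p t0.
Proof.
case/card_gt0P => t1 _ p_ge0.
by have [t0 _] := @eq_bigmax _ _ _ 0 t1 xpredT p isT (fun t _ => p_ge0 t); exists t0.
Qed.

Section OutputDistribution.
Variables (R : realType) (N : nat) (O : finType) (F : 'I_N -> O).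
Hypotheses (N_gt0 : (0 < N)%N) (F_surj : forall o, exists a, F a = o).

Lemma outdist_gt0 o : 0 < outdist R F o.
Proof.
rewrite /outdist divr_gt0 ?ltr0n // card_gt0.
by have [a <-] := F_surj o; apply/set0Pn; exists a; rewrite inE.
Qed.

Lemma sum_outdist : \sum_o outdist R F o = 1.
Proof.
rewrite /outdist -mulr_suml -natr_sum.
have -> : (\sum_o #|[set a | F a == o]|)%N = N.
  rewrite -[RHS]card_ord -sum1_card (partition_big F xpredT) //=.
  by apply: eq_bigr => o _; rewrite -sum1_card; apply: eq_bigl => a; rewrite inE.
by rewrite mulfV ?gt_eqF ?ltr0n.
Qed.
End OutputDistribution.

Local Open Scope classical_set_scope.

Lemma ereal_inf_sup_image_within (R : realType) (I : Type) (S : set I) (f : I -> R)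
    (lo hi : R) :
  S !=set0 -> (forall i, S i -> lo <= f i <= hi) ->
  [/\ (lo%:E <= ereal_inf [set (f i)%:E | i in S])%E,
      (ereal_inf [set (f i)%:E | i in S] <= ereal_sup [set (f i)%:E | i in S])%E
    & (ereal_sup [set (f i)%:E | i in S] <= hi%:E)%E].
Proof.
move=> [i0 Si0] f_within; split.
- by apply/ereal_infP => _ [i Si <-]; rewrite lee_fin; case/andP: (f_within i Si).
- apply: (@le_trans _ _ (f i0)%:E).
    by apply: ereal_inf_lbound; exists i0.
  by apply: ereal_sup_ubound; exists i0.
- by apply/ereal_supP => _ [i Si <-]; rewrite lee_fin; case/andP: (f_within i Si).
Qed.

Theorem proposition1 (R : realType) (O : nat -> finType)
  (F : forall N : nat, 'I_N -> O N)
  (Fsurj : forall N : nat, (0 < N)%N -> forall o : O N, exists a : 'I_N, F N a = o)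
  (FOP : exists K : nat, forall N : nat, (0 < N)%N -> (#|O N| <= K)%N)
  (Sne : exists N : nat, (0 < N)%N /\ (2 <= #|O N|)%N)
  (alpha : \bar R) (halpha : (0 < alpha)%E) :
  let S := [set N : nat | (0 < N)%N /\ (2 <= #|O N|)%N] in
  let ratio := fun N : nat =>
    @leakage R O F alpha N / Talpha (@outdist R N (O N) (F N)) alpha in
  (0 < ereal_inf [set (ratio N)%:E | N in S])%E /\
  (ereal_inf [set (ratio N)%:E | N in S] <= ereal_sup [set (ratio N)%:E | N in S])%E /\
  (ereal_sup [set (ratio N)%:E | N in S] < +oo)%E.
Proof.
move=> S ratio; have [K card_le] := FOP; have [N1 [N1_gt0 card_N1]] := Sne.
have K_gt0 : (0 < K)%N := leq_trans (ltnW card_N1) (card_le N1 N1_gt0).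
have ratio_within N : S N -> renyi_ratio_lb K alpha <= ratio N <= renyi_ratio_ub K alpha.
  move=> [N_gt0 card_N].
  have p_gt0 := outdist_gt0 R N_gt0 (Fsurj N N_gt0).
  have sum_p := sum_outdist R (F N) N_gt0.
  have [t0 pmax_t0] := pmax_attained (ltnW card_N) (fun o => ltW (p_gt0 o)).
  have T_gt0 := Talpha_gt0 p_gt0 sum_p pmax_t0 card_N halpha.
  rewrite /ratio /leakage ler_pdivlMr // ler_pdivrMr //.
  have card_le_N := card_le N N_gt0.
  by rewrite (renyi_ratio_lb_le p_gt0 sum_p pmax_t0 card_N card_le_N halpha)
             (renyi_le_ratio_ub p_gt0 sum_p pmax_t0 card_N card_le_N halpha).
have [inf_ge inf_le_sup sup_le] :=
  ereal_inf_sup_image_within (ex_intro _ N1 (conj N1_gt0 card_N1)) ratio_within.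
split; last split => //.
- by apply: lt_le_trans inf_ge; rewrite lte_fin renyi_ratio_lb_gt0.
- exact: le_lt_trans sup_le (ltry _).
Qed.
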